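(* Assume the setting and algorithm described in the context. If $0<\alpha\le\frac1{2L}$, then for all $k\ge0$, almost surely, $$\mathbb E\big[F(\bar x^{k+1})\,|\,\mathcal F^k\big]\le F(\bar x^k)-\frac\alpha2\|\nabla F(\bar x^k)\|^2-\frac\alpha4\|\overline{\nabla\mathbf f}(x^k)\|^2+\frac{\alpha L^2}{n}\|x^k-Jx^k\|^2+\frac{\alpha^2L^3}{n}t^k .$$
   Context: Setting. Let $n,m,p\ge1$ be integers and $\mathcal V=\{1,\dots,n\}$. For each $i\in\mathcal V$ and $j\in\{1,\dots,m\}$, $f_{i,j}:\mathbb R^p\to\mathbb R$ is differentiable and $L$-smooth for some $L>0$, i.e. $\|\nabla f_{i,j}(x)-\nabla f_{i,j}(y)\|\le L\|x-y\|$ for all $x,y\in\mathbb R^p$. Let $f_i:=\frac1m\sum_{j=1}^m f_{i,j}$ and $F:=\frac1n\sum_{i=1}^n f_i$, and assume $F^*:=\inf_{x\in\mathbb R^p}F(x)>-\infty$. Let $\underline W=(\underline w_{ir})\in\mathbb R^{n\times n}$ be a nonnegative, primitive, doubly stochastic matrix ($\underline W\mathbf 1_n=\mathbf 1_n$, $\mathbf 1_n^\top\underline W=\mathbf 1_n^\top$), and let $\lambda\in[0,1)$ be its second largest singular value. Any expression with $\lambda$ in a denominator is read as $+\infty$ when $\lambda=0$. Algorithm GT-SAGA with step-size $\alpha>0$: fix a deterministic $\bar x^0\in\mathbb R^p$; for all $i\in\mathcal V$ set $x_i^0=\bar x^0$, $z_{i,j}^0=x_i^0$ for all $j$, $y_i^0=0$,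 $g_i^{-1}=0$. For $k=0,1,2,\dots$ and every $i\in\mathcal V$: draw $\tau_i^k$ uniformly from $\{1,\dots,m\}$; set $g_i^k=\nabla f_{i,\tau_i^k}(x_i^k)-\nabla f_{i,\tau_i^k}(z_{i,\tau_i^k}^k)+\frac1m\sum_{j=1}^m\nabla f_{i,j}(z_{i,j}^k)$; set $y_i^{k+1}=\sum_{r=1}^n\underline w_{ir}(y_r^k+g_r^k-g_r^{k-1})$; set $x_i^{k+1}=\sum_{r=1}^n\underline w_{ir}(x_r^k-\alpha y_r^{k+1})$; draw $s_i^k$ uniformly from $\{1,\dots,m\}$; set $z_{i,j}^{k+1}=x_i^k$ if $j=s_i^k$ and $z_{i,j}^{k+1}=z_{i,j}^k$ otherwise. The family $\{\tau_i^k,s_i^k: i\in\mathcal V,k\ge0\}$ is independent. Notation. $x^k,y^k,g^k\in\mathbb R^{np}$ stack the $x_i^k$, $y_i^k$, $g_i^k$; $\nabla\mathbf f(x^k)\in\mathbb R^{np}$ stacks $\nabla f_i(x_i^k)$, $i=1,\dots,n$; $W=\underline W\otimes I_p$, $J=(\frac1n\mathbf 1_n\mathbf 1_n^\top)\otimes I_p$; $\bar x^k=\frac1n\sum_i x_i^k$, $\bar g^k=\frac1n\sum_i g_i^k$, $\overline{\nabla\mathbf f}(x^k)=\frac1n\sum_i\nabla f_i(x_i^k)$. $\mathcal F^0$ is the trivial $\sigma$-algebra and $\mathcal F^k=\sigma(\{\tau_i^t,s_i^t:i\in\mathcal V,\ t\le k-1\})$ for $k\ge1$. $t^k:=\frac1n\sum_{i=1}^n\frac1m\sum_{j=1}^m\|\bar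 x^k-z_{i,j}^k\|^2$. $\|\nabla\mathbf f(x^0)\|^2:=\sum_{i=1}^n\|\nabla f_i(\bar x^0)\|^2$. Norms are Euclidean (spectral for matrices); vector and matrix inequalities are entrywise. *)

From HB Require Import structures.
From mathcomp Require Import all_boot all_order all_algebra.
From mathcomp Require Import all_classical all_reals.
From mathcomp Require Import topology normedtype derive.
Set Implicit Arguments. Unset Strict Implicit. Unset Printing Implicit Defensive.
Import Order.TTheory GRing.Theory Num.Theory.
Import numFieldNormedType.Exports.
Local Open Scope ring_scope.

Section GTSAGA.
Variables (R : realType) (n m p : nat).

Notation vec := 'rV[R]_p.

Definition dotv (u v : vec) : R := \sum_(j < p) u ord0 j * v ord0 j.
Definition sqn (u : vec) : R := dotv u u.
Definition enorm (u : vec) : R := Num.sqrt (sqn u).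

Definition is_gradient (f : vec -> R) (g : vec -> vec) : Prop :=
  forall x, differentiable f x /\ (('d f x : vec -> R) = fun v => dotv (g x) v).

Definition L_smooth (L : R) (g : vec -> vec) : Prop :=
  forall x y, enorm (g x - g y) <= L * enorm (x - y).

Definition f_loc (f : 'I_n -> 'I_m -> vec -> R) (i : 'I_n) (x : vec) : R :=
  m%:R^-1 * \sum_(j < m) f i j x.
Definition Fobj (f : 'I_n -> 'I_m -> vec -> R) (x : vec) : R :=
  n%:R^-1 * \sum_(i < n) f_loc f i x.
Definition grad_loc (g : 'I_n -> 'I_m -> vec -> vec) (i : 'I_n) (x : vec) : vec :=
  m%:R^-1 *: \sum_(j < m) g i j x.
Definition gradF (g : 'I_n -> 'I_m -> vec -> vec) (x : vec) : vec :=
  n%:R^-1 *: \sum_(i < n) grad_loc g i x.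

Definition nonneg_mx (W : 'M[R]_n) : Prop := forall i j, 0 <= W i j.
Definition mxpow (W : 'M[R]_n) (k : nat) : 'M[R]_n := iter k (mulmx W) 1%:M.
Definition primitive_mx (W : 'M[R]_n) : Prop :=
  exists k, forall i j, 0 < mxpow W k i j.
Definition doubly_stochastic (W : 'M[R]_n) : Prop :=
  (forall i, \sum_(r < n) W i r = 1) /\ (forall r, \sum_(i < n) W i r = 1).

Definition stack := 'I_n -> vec.
Definition avg (x : stack) : vec := n%:R^-1 *: \sum_(i < n) x i.
(* ||x - J x||^2 *)
Definition consensus_err (x : stack) : R := \sum_(i < n) sqn (x i - avg x).
Definition avg_grad (g : 'I_n -> 'I_m -> vec -> vec) (x : stack) : vec :=
  n%:R^-1 *: \sum_(i < n) grad_loc g i (x i).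

(* random draws at one iteration: (tau^k_i)_i and (s^k_i)_i *)
Definition draw := ({ffun 'I_n -> 'I_m} * {ffun 'I_n -> 'I_m})%type.
Definition sample_path := nat -> draw.

(* state at iteration k: x^k, y^k, z^k, and g^{k-1} *)
Record state := State {
  st_x : stack; st_y : stack; st_z : 'I_n -> 'I_m -> vec; st_gprev : stack }.

Definition init_state (x0 : vec) : state :=
  State (fun _ => x0) (fun _ => 0) (fun _ _ => x0) (fun _ => 0).

Definition saga_g (g : 'I_n -> 'I_m -> vec -> vec) (S : state) (tau : 'I_n -> 'I_m)
  : stack := fun i =>
  g i (tau i) (st_x S i) - g i (tau i) (st_z S i (tau i))
  + m%:R^-1 *: \sum_(j < m) g i j (st_z S i j).

Definition mix (W : 'M[R]_n) (u : stack) : stack :=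
  fun i => \sum_(r < n) W i r *: u r.

Definition step (g : 'I_n -> 'I_m -> vec -> vec) (W : 'M[R]_n) (alpha : R)
  (S : state) (d : draw) : state :=
  let gk := saga_g g S d.1 in
  let ynew := mix W (fun r => st_y S r + gk r - st_gprev S r) in
  let xnew := mix W (fun r => st_x S r - alpha *: ynew r) in
  let znew := fun i j => if j == d.2 i then st_x S i else st_z S i j in
  State xnew ynew znew gk.

Fixpoint gt_saga (g : 'I_n -> 'I_m -> vec -> vec) (W : 'M[R]_n) (alpha : R)
  (x0 : vec) (w : sample_path) (k : nat) : state :=
  match k with
  | 0 => init_state x0
  | k'.+1 => step g W alpha (gt_saga g W alpha x0 w k') (w k')
  end.

Definition tk (S : state) : R :=
  n%:R^-1 * \sum_(i < n) (m%:R^-1 * \sum_(j < m) sqn (avg (st_x S) - st_z S i j)).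

(* Conditional expectation given F^k = sigma(draws at iterations < k), for a
   random variable X that depends on the sample path only through the draws at
   iterations <= k: the draws are independent and uniform, so E[X | F^k](w) is
   the uniform average over the iteration-k draw, the earlier ones being fixed. *)
Definition condexp (k : nat) (X : sample_path -> R) (w : sample_path) : R :=
  #|{: draw}|%:R^-1 *
  \sum_(d : draw) X (fun t => if t == k then d else w t).

End GTSAGA.

(* Since W is doubly stochastic and y tracks the average of the SAGA estimates,
   the network averages satisfy xbar^{k+1} = xbar^k - alpha gbar^k.  The descent
   lemma for the L-smooth F bounds F(xbar^{k+1}) by a quadratic in gbar^k.
   Conditioning on F^k averages over the independent uniform draws tau^k, under
   which gbar^k is unbiased for mu = avg_grad(x^k), with variance at most
   (2 L^2 / n^2) (||x - Jx||^2 + n t^k).  Finally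
   -<grad F(xbar), mu> = (|grad F(xbar) - mu|^2 - |grad F(xbar)|^2 - |mu|^2) / 2,
   the gap |grad F(xbar) - mu|^2 is at most (L^2 / n) ||x - Jx||^2, and
   alpha L <= 1/2 absorbs the second-order terms. *)
From Pilot Require Import Defs.
From mathcomp Require Import all_boot all_order all_algebra.
From mathcomp Require Import all_classical all_reals.
From mathcomp Require Import topology normedtype derive.
From mathcomp Require Import ring lra.
Import Order.TTheory GRing.Theory Num.Theory.
Import numFieldNormedType.Exports.
Local Open Scope ring_scope.
Set Implicit Arguments. Unset Strict Implicit. Unset Printing Implicit Defensive.

Section InnerProduct.
Variables (R : realType) (p : nat).
Notation vec := 'rV[R]_p.
Notation dotv := (@dotv R p).
Notation sqn := (@sqn R p).

Lemma dotvC u v : dotv u v = dotv v u.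
Proof. by apply: eq_bigr => j _; rewrite mulrC. Qed.

Lemma dotvDl u v w : dotv (u + v) w = dotv u w + dotv v w.
Proof. by rewrite /Defs.dotv -big_split; apply: eq_bigr => j _; rewrite !mxE mulrDl. Qed.

Lemma dotvDr u v w : dotv w (u + v) = dotv w u + dotv w v.
Proof. by rewrite dotvC dotvDl !(dotvC w). Qed.

Lemma dotvZl a u v : dotv (a *: u) v = a * dotv u v.
Proof. by rewrite /Defs.dotv mulr_sumr; apply: eq_bigr => j _; rewrite !mxE mulrA. Qed.

Lemma dotvZr a u v : dotv v (a *: u) = a * dotv v u.
Proof. by rewrite dotvC dotvZl dotvC. Qed.

Lemma dotvNl u v : dotv (- u) v = - dotv u v.
Proof. by rewrite -scaleN1r dotvZl mulN1r. Qed.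

Lemma dotvNr u v : dotv v (- u) = - dotv v u.
Proof. by rewrite dotvC dotvNl dotvC. Qed.

Lemma dotvBl u v w : dotv (u - v) w = dotv u w - dotv v w.
Proof. by rewrite dotvDl dotvNl. Qed.

Lemma dotv0l v : dotv 0 v = 0.
Proof. by rewrite -(scale0r 0) dotvZl mul0r. Qed.

Lemma dotv_suml (I : finType) (P : pred I) (F : I -> vec) v :
  dotv (\sum_(i | P i) F i) v = \sum_(i | P i) dotv (F i) v.
Proof.
apply: (big_ind2 (fun a b => dotv a v = b)) => //; first exact: dotv0l.
by move=> a b c d <- <-; rewrite dotvDl.
Qed.

Lemma sqnE v : sqn v = \sum_c v ord0 c ^+ 2.
Proof. by apply: eq_bigr => c _; rewrite expr2. Qed.

Lemma sqn_ge0 v : 0 <= sqn v.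
Proof. by rewrite sqnE; apply: sumr_ge0 => c _; exact: sqr_ge0. Qed.

Lemma sqn_eq0 v : sqn v = 0 -> v = 0.
Proof.
rewrite sqnE => /eqP; rewrite psumr_eq0 => [/allP v0|c _]; last exact: sqr_ge0.
by apply/rowP => c; rewrite mxE; apply/eqP; rewrite -sqrf_eq0; by have := v0 c (mem_index_enum c).
Qed.

Lemma sqnD u v : sqn (u + v) = sqn u + 2 * dotv u v + sqn v.
Proof. by rewrite /Defs.sqn !dotvDl !dotvDr (dotvC v u); ring. Qed.

Lemma sqnB u v : sqn (u - v) = sqn u - 2 * dotv u v + sqn v.
Proof. by rewrite /Defs.sqn !dotvDl !dotvDr !dotvNl !dotvNr (dotvC v u); ring. Qed.

Lemma sqnZ a v : sqn (a *: v) = a ^+ 2 * sqn v.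
Proof. by rewrite /Defs.sqn dotvZl dotvZr; ring. Qed.

Lemma sqn_subC u v : sqn (u - v) = sqn (v - u).
Proof. by rewrite -opprB /Defs.sqn dotvNl dotvNr opprK. Qed.

Lemma sqnD_le u v : sqn (u + v) <= 2 * sqn u + 2 * sqn v.
Proof. by have := sqn_ge0 (u - v); rewrite sqnB sqnD; lra. Qed.

Lemma cauchy_schwarz u v : dotv u v ^+ 2 <= sqn u * sqn v.
Proof.
have [u0|su0] := eqVneq (sqn u) 0.
  by rewrite u0 mul0r (sqn_eq0 u0) dotv0l expr0n.
have su : 0 < sqn u by rewrite lt_def su0 sqn_ge0.
have := mulr_ge0 (ltW su) (sqn_ge0 ((dotv u v / sqn u) *: u - v)).
rewrite sqnB sqnZ dotvZl.
suff -> : sqn u * ((dotv u v / sqn u) ^+ 2 * sqn u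
            - 2 * (dotv u v / sqn u * dotv u v) + sqn v)
          = sqn u * sqn v - dotv u v ^+ 2 by rewrite subr_ge0.
by field.
Qed.

Lemma L_smooth_sqn (L : R) (g : vec -> vec) : 0 <= L -> L_smooth L g ->
  forall x y, sqn (g x - g y) <= L ^+ 2 * sqn (x - y).
Proof.
move=> L0 hs x y; have := lerXn2r 2 (sqrtr_ge0 _) (mulr_ge0 L0 (sqrtr_ge0 _)) (hs x y).
by rewrite exprMn !sqr_sqrtr ?sqn_ge0.
Qed.

Lemma L_smooth_dotv_le (L : R) (g : vec -> vec) (x v : vec) (t : R) :
  0 <= L -> L_smooth L g -> 0 <= t ->
  dotv (g (t *: v + x) - g x) v <= L * t * sqn v.
Proof.
move=> L0 hs t0; set a := g (t *: v + x) - g x.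
have Lts0 : 0 <= L * t * sqn v by rewrite !mulr_ge0 ?sqn_ge0.
have : dotv a v ^+ 2 <= (L * t * sqn v) ^+ 2.
  apply: le_trans (cauchy_schwarz a v) _.
  have := L_smooth_sqn L0 hs (t *: v + x) x; rewrite addrK sqnZ -/a => sm.
  have -> : (L * t * sqn v) ^+ 2 = L ^+ 2 * (t ^+ 2 * sqn v) * sqn v by ring.
  by apply: ler_wpM2r; rewrite ?sqn_ge0.
by move: Lts0; set y := dotv a v; set z := L * t * sqn v; nra.
Qed.

Lemma is_derive_line (f : vec -> R) (g : vec -> vec) (x v : vec) (t : R) :
  is_gradient f g ->
  is_derive t 1 (fun s : R => f (s *: v + x)) (dotv (g (t *: v + x)) v).
Proof.
move=> hg; have [df dfE] := hg (t *: v + x).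
have E : (fun h : R => h^-1 *: (((fun s : R => f (s *: v + x)) \o shift t) (h *: 1)
            - f (t *: v + x)))
       = (fun h : R => h^-1 *: ((f \o shift (t *: v + x)) (h *: v) - f (t *: v + x))).
  apply/funext => h /=; congr (_ *: (f _ - _)).
  by rewrite /shift /= [h *: 1]mulr1 scalerDl addrA.
split; first by rewrite /derivable E; exact: diff_derivable.
by rewrite /derive E -/(derive f (t *: v + x) v) deriveE // dfE.
Qed.

(* By Cauchy-Schwarz and smoothness, psi below has a nonpositive derivative on [0, 1]. *)
Lemma L_smooth_descent (f : vec -> R) (g : vec -> vec) (L : R) (x v : vec) :
  is_gradient f g -> 0 <= L -> L_smooth L g ->
  f (v + x) <= f x + dotv (g x) v + L / 2 * sqn v.
Proof.
move=> hg L0 hs; set c := dotv (g x) v; set s := sqn v.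
pose psi := (fun t : R => f (t *: v + x)) - c \*: id - (L / 2 * s) \*: (id * id).
have D (t : R) : is_derive t (1 : R) psi
    (dotv (g (t *: v + x)) v - c *: (1 : R) - (L / 2 * s) *: (t *: (1 : R) + t *: 1)).
  by apply: is_deriveB; apply: is_deriveB; exact: is_derive_line.
have : psi 1 <= psi 0.
  apply: (@ler0_derive1_le_cc _ psi 0 1); last 3 first.
  - by rewrite in_itv /= lexx ler01.
  - by rewrite in_itv /= lexx ler01.
  - exact: ler01.
  - by move=> t _; have [] := D t.
  - move=> t; rewrite in_itv /= => /andP [t0 _].
    rewrite derive1E (@derive_val _ _ _ _ _ _ _ (D t)).
    have := L_smooth_dotv_le x v L0 hs (ltW t0); rewrite dotvBl -/c -/s.
    rewrite /GRing.scale /=; lra.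
  - by apply: derivable_within_continuous => t _; have [] := D t.
have psiE (t : R) : psi t = f (t *: v + x) - c * t - L / 2 * s * (t * t) by [].
by rewrite !psiE scale1r scale0r add0r !mulr1 !mulr0 subr0; lra.
Qed.

End InnerProduct.

Section Mean.
Variables (R : realType) (N : nat).
Hypothesis N_gt0 : (0 < N)%N.

Definition mean (a : 'I_N -> R) : R := N%:R^-1 * \sum_j a j.
Definition var (a : 'I_N -> R) : R := mean (fun j => a j ^+ 2) - mean a ^+ 2.

Lemma mean_cst (c : R) : mean (fun=> c) = c.
Proof. by rewrite /mean sumr_const card_ord -[c *+ _]mulr_natl mulKf // pnatr_eq0 -lt0n. Qed.

Lemma meanD (a b : 'I_N -> R) : mean (fun j => a j + b j) = mean a + mean b.
Proof. by rewrite /mean big_split mulrDr. Qed.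

Lemma meanZ (c : R) (a : 'I_N -> R) : mean (fun j => c * a j) = c * mean a.
Proof. by rewrite /mean -mulr_sumr mulrCA. Qed.

Lemma mean_le (a b : 'I_N -> R) : (forall j, a j <= b j) -> mean a <= mean b.
Proof. by move=> ab; rewrite ler_wpM2l ?invr_ge0 ?ler0n // ler_sum. Qed.

Lemma var_ge0 (a : 'I_N -> R) : 0 <= var a.
Proof.
have -> : var a = mean (fun j => (a j - mean a) ^+ 2).
  transitivity (mean (fun j => a j ^+ 2 + (- 2 * mean a * a j + mean a ^+ 2))).
    by rewrite !meanD meanZ mean_cst /var; ring.
  by congr mean; apply/funext => j; ring.
by rewrite mulr_ge0 ?invr_ge0 ?ler0n // sumr_ge0 // => j _; exact: sqr_ge0.
Qed.

Lemma sqr_mean_le (a : 'I_N -> R) : mean a ^+ 2 <= mean (fun j => a j ^+ 2).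
Proof. by rewrite -subr_ge0; exact: var_ge0. Qed.

Lemma var_le (a : 'I_N -> R) : var a <= mean (fun j => a j ^+ 2).
Proof. by rewrite /var lerBlDr lerDl sqr_ge0. Qed.

Lemma var_affine (k z : R) (a : 'I_N -> R) :
  var (fun j => k * (a j + z)) = k ^+ 2 * var a.
Proof.
rewrite /var /=.
have -> : (fun j => (k * (a j + z)) ^+ 2)
          = fun j => k ^+ 2 * a j ^+ 2 + (2 * k ^+ 2 * z * a j + (k * z) ^+ 2).
  by apply/funext => j; ring.
have -> : (fun j => k * (a j + z)) = fun j => k * a j + k * z.
  by apply/funext => j; ring.
by rewrite !meanD !meanZ !mean_cst; ring.
Qed.

Lemma sqn_mean_le (p : nat) (v : 'I_N -> 'rV[R]_p) :
  sqn (N%:R^-1 *: \sum_k v k) <= mean (fun k => sqn (v k)).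
Proof.
rewrite sqnE /mean.
have -> : \sum_k sqn (v k) = \sum_c \sum_k v k ord0 c ^+ 2.
  by rewrite [RHS]exchange_big; apply: eq_bigr => k _; rewrite sqnE.
rewrite mulr_sumr; apply: ler_sum => c _.
by rewrite mxE summxE; exact: (sqr_mean_le (fun k => v k ord0 c)).
Qed.

End Mean.

Section UniformDraw.
Variables (R : realType) (n m : nat).
Hypothesis m_gt0 : (0 < m)%N.
Local Notation draws := {ffun 'I_n -> 'I_m}.

Definition uexpect (phi : draws -> R) : R := #|{: draws}|%:R^-1 * \sum_t phi t.

Lemma card_draws : #|{: draws}| = (m ^ n)%N.
Proof. by rewrite card_ffun !card_ord. Qed.

Lemma uexpect_cst (c : R) : uexpect (fun=> c) = c.
Proof.
rewrite /uexpect sumr_const -[c *+ _]mulr_natl mulKf // card_draws natrX.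
by rewrite expf_neq0 // pnatr_eq0 -lt0n.
Qed.

Lemma uexpectD (phi psi : draws -> R) :
  uexpect (fun t => phi t + psi t) = uexpect phi + uexpect psi.
Proof. by rewrite /uexpect big_split mulrDr. Qed.

Lemma uexpectZ (c : R) (phi : draws -> R) :
  uexpect (fun t => c * phi t) = c * uexpect phi.
Proof. by rewrite /uexpect -mulr_sumr mulrCA. Qed.

Lemma uexpect_sum (I : finType) (phi : I -> draws -> R) :
  uexpect (fun t => \sum_i phi i t) = \sum_i uexpect (phi i).
Proof. by rewrite /uexpect exchange_big mulr_sumr. Qed.

Lemma uexpect_le (phi psi : draws -> R) :
  (forall t, phi t <= psi t) -> uexpect phi <= uexpect psi.
Proof. by move=> le_phi; rewrite ler_wpM2l ?invr_ge0 ?ler0n // ler_sum. Qed.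

Lemma uexpect_prod (F : 'I_n -> 'I_m -> R) :
  uexpect (fun t => \prod_i F i (t i)) = \prod_i mean (F i).
Proof.
rewrite /uexpect /mean -(bigA_distr_bigA F) big_split /= prodr_const card_draws.
by rewrite card_ord natrX exprVn.
Qed.

Lemma uexpect_coord (i0 : 'I_n) (a : 'I_m -> R) :
  uexpect (fun t => a (t i0)) = mean a.
Proof.
pose F i j := if i == i0 then a j else 1.
have -> : (fun t : draws => a (t i0)) = fun t => \prod_i F i (t i).
  by apply/funext => t; rewrite (bigD1 i0) //= /F eqxx big1 ?mulr1 // => i /negPf ->.
rewrite uexpect_prod (bigD1 i0) //= /F eqxx big1 ?mulr1 // => i /negPf ->.
exact: mean_cst.
Qed.

Lemma uexpect_coord2 (i0 i1 : 'I_n) (a b : 'I_m -> R) : i0 != i1 ->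
  uexpect (fun t => a (t i0) * b (t i1)) = mean a * mean b.
Proof.
move=> i01; have i10 : (i1 == i0) = false by rewrite eq_sym (negPf i01).
pose F i j := if i == i0 then a j else if i == i1 then b j else 1.
have -> : (fun t : draws => a (t i0) * b (t i1)) = fun t => \prod_i F i (t i).
  apply/funext => t; rewrite (bigD1 i0) //= (bigD1 i1) ?i10 //= /F eqxx i10 eqxx.
  by rewrite big1 ?mulr1 // => i /andP [/negPf -> /negPf ->].
rewrite uexpect_prod (bigD1 i0) //= (bigD1 i1) ?i10 //= /F eqxx i10 eqxx.
rewrite big1 ?mulr1 // => i /andP [/negPf -> /negPf ->]; exact: mean_cst.
Qed.

Lemma uexpect_sqr_sum (h : 'I_n -> 'I_m -> R) :
  uexpect (fun t => (\sum_i h i (t i)) ^+ 2) = (\sum_i mean (h i)) ^+ 2 + \sum_i var (h i).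
Proof.
have sqr_sum (x : 'I_n -> R) : (\sum_i x i) ^+ 2 = \sum_i \sum_i' x i * x i'.
  by rewrite expr2 mulr_suml; apply: eq_bigr => i _; rewrite mulr_sumr.
under eq_fun => t do rewrite sqr_sum.
rewrite sqr_sum uexpect_sum -big_split /=; apply: eq_bigr => i _.
rewrite uexpect_sum (bigD1 i) //= [in RHS](bigD1 i) //= addrAC; congr (_ + _).
  by rewrite (uexpect_coord i (fun j => h i j * h i j)) /var expr2 addrC subrK.
by apply: eq_bigr => i' i'i; rewrite uexpect_coord2 // eq_sym.
Qed.

End UniformDraw.

Section GradientTracking.
Variables (R : realType) (n m p : nat).
Variables (g : 'I_n -> 'I_m -> 'rV[R]_p -> 'rV[R]_p) (W : 'M[R]_n) (alpha : R).
Variable x0 : 'rV[R]_p.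
Hypothesis W_colsum : forall r, \sum_(i < n) W i r = 1.
Local Notation stack := (stack R n p).

Lemma avgD (u v : stack) : avg (fun i => u i + v i) = avg u + avg v.
Proof. by rewrite /avg big_split scalerDr. Qed.

Lemma avgB (u v : stack) : avg (fun i => u i - v i) = avg u - avg v.
Proof. by rewrite avgD /avg sumrN scalerN. Qed.

Lemma avgZ (a : R) (u : stack) : avg (fun i => a *: u i) = a *: avg u.
Proof. by rewrite /avg -scaler_sumr !scalerA mulrC. Qed.

Lemma avg_mix (u : stack) : avg (mix W u) = avg u.
Proof.
rewrite /avg /mix exchange_big /=; congr (_ *: _); apply: eq_bigr => r _.
by rewrite -scaler_suml W_colsum scale1r.
Qed.

Lemma avg_mix_tracking (S : state R n m p) (gk : stack) :
  avg (st_y S) = avg (st_gprev S) ->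
  avg (mix W (fun r => st_y S r + gk r - st_gprev S r)) = avg gk.
Proof.
move=> yS; rewrite avg_mix (avgB (fun r => st_y S r + gk r)) avgD yS.
by rewrite addrAC subrr add0r.
Qed.

Lemma avg_y_gprev w k :
  avg (st_y (gt_saga g W alpha x0 w k)) = avg (st_gprev (gt_saga g W alpha x0 w k)).
Proof. by elim: k => [|k IH] //=; exact: avg_mix_tracking. Qed.

Lemma avg_x_step w k d (S := gt_saga g W alpha x0 w k) :
  avg (st_x (step g W alpha S d)) = avg (st_x S) - alpha *: avg (saga_g g S d.1).
Proof.
rewrite /step /= avg_mix (avgB (st_x S)) avgZ avg_mix_tracking //.
exact: avg_y_gprev.
Qed.

Lemma gt_saga_prefix k (w1 w2 : sample_path n m) :
  (forall t, (t < k)%N -> w1 t = w2 t) ->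
  gt_saga g W alpha x0 w1 k = gt_saga g W alpha x0 w2 k.
Proof.
elim: k => [//|k IH] w12 /=.
by rewrite IH ?w12 // => t tk; apply: w12; exact: ltnW.
Qed.

End GradientTracking.

Lemma condexp_uexpect (R : realType) (n m : nat) (k : nat)
    (X : sample_path n m -> R) (Y : {ffun 'I_n -> 'I_m} -> R) (w : sample_path n m) :
  (0 < m)%N -> (forall d, X (fun t => if t == k then d else w t) = Y d.1) ->
  condexp k X w = uexpect Y.
Proof.
move=> m_gt0 XY; rewrite /condexp /uexpect.
under eq_bigr => d _ do rewrite XY.
rewrite -(pair_bigA _ (fun t _ => Y t)) /=.
under eq_bigr => t _ do rewrite sumr_const -mulr_natl.
rewrite -mulr_sumr card_prod natrM; field.
by rewrite card_draws natrX expf_neq0 // pnatr_eq0 -lt0n.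
Qed.

Section SagaBounds.
Variables (R : realType) (n m p : nat).
Variables (f : 'I_n -> 'I_m -> 'rV[R]_p -> R) (g : 'I_n -> 'I_m -> 'rV[R]_p -> 'rV[R]_p).
Variable L : R.
Hypotheses (n_gt0 : (0 < n)%N) (m_gt0 : (0 < m)%N).
Hypothesis f_grad : forall i j, is_gradient (f i j) (g i j).
Hypothesis L_ge0 : 0 <= L.
Hypothesis g_smooth : forall i j, L_smooth L (g i j).
Local Notation state := (state R n m p).
Local Notation draws := {ffun 'I_n -> 'I_m}.

Lemma Fobj_descent x v :
  Fobj f (v + x) <= Fobj f x + dotv (gradF g x) v + L / 2 * sqn v.
Proof.
set c := L / 2 * sqn v.
apply: (@le_trans _ _ (n%:R^-1 * \sum_i mean (fun j => f i j x + dotv (g i j x) v + c))).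
  apply: ler_wpM2l; first by rewrite invr_ge0 ler0n.
  apply: ler_sum => i _; apply: mean_le => j.
  exact: L_smooth_descent.
rewrite /Fobj /f_loc /gradF /grad_loc dotvZl dotv_suml.
under eq_bigr => i _ do rewrite !meanD (mean_cst m_gt0).
rewrite !big_split /= !mulrDr sumr_const card_ord -[c *+ _]mulr_natl mulKf; last first.
  by rewrite pnatr_eq0 -lt0n.
rewrite le_eqVlt; apply/orP; left; apply/eqP.
congr (_ + _ + _); congr (_ * _); apply: eq_bigr => i _.
by rewrite dotvZl dotv_suml.
Qed.

Definition saga_term (S : state) i j : 'rV[R]_p :=
  g i j (st_x S i) - g i j (st_z S i j) + m%:R^-1 *: \sum_(j' < m) g i j' (st_z S i j').

Lemma saga_term_unbiased S i : m%:R^-1 *: \sum_j saga_term S i j = grad_loc g i (st_x S i).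
Proof.
rewrite /saga_term big_split /= sumrB sumr_const card_ord.
rewrite -[(m%:R^-1 *: _) *+ m]scaler_nat scalerA mulfV ?pnatr_eq0 -?lt0n //.
by rewrite scale1r subrK.
Qed.

Lemma uexpect_dotv_saga S c :
  uexpect (fun t => dotv c (avg (saga_g g S t))) = dotv c (avg_grad g (st_x S)).
Proof.
have -> : (fun t : draws => dotv c (avg (saga_g g S t)))
          = fun t => n%:R^-1 * \sum_i dotv (saga_term S i (t i)) c.
  by apply/funext => t; rewrite dotvC /avg dotvZl dotv_suml.
rewrite uexpectZ uexpect_sum.
under eq_bigr => i _ do rewrite (uexpect_coord m_gt0 i (fun j => dotv (saga_term S i j) c)).
rewrite dotvC /avg_grad dotvZl dotv_suml; congr (_ * _); apply: eq_bigr => i _.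
by rewrite -saga_term_unbiased dotvZl dotv_suml.
Qed.

Lemma uexpect_sqn_saga S :
  uexpect (fun t => sqn (avg (saga_g g S t))) =
  sqn (avg_grad g (st_x S)) + \sum_i \sum_c var (fun j => n%:R^-1 * saga_term S i j ord0 c).
Proof.
have -> : (fun t : draws => sqn (avg (saga_g g S t)))
          = fun t => \sum_c (\sum_i n%:R^-1 * saga_term S i (t i) ord0 c) ^+ 2.
  apply/funext => t; rewrite sqnE; apply: eq_bigr => c _.
  by rewrite /avg mxE summxE mulr_sumr.
rewrite uexpect_sum.
under eq_bigr => c _ do
  rewrite (uexpect_sqr_sum m_gt0 (fun i j => n%:R^-1 * saga_term S i j ord0 c)).
rewrite big_split /= [in RHS]exchange_big sqnE; congr (_ + _).
apply: eq_bigr => c _; congr (_ ^+ 2).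
rewrite /avg_grad mxE summxE mulr_sumr; apply: eq_bigr => i _.
by rewrite -saga_term_unbiased mxE summxE meanZ.
Qed.

Lemma saga_var_le S :
  \sum_i \sum_c var (fun j => n%:R^-1 * saga_term S i j ord0 c)
  <= n%:R^-1 ^+ 2 * \sum_i mean (fun j => sqn (g i j (st_x S i) - g i j (st_z S i j))).
Proof.
rewrite mulr_sumr; apply: ler_sum => i _.
set d := fun j => g i j (st_x S i) - g i j (st_z S i j).
set zb := m%:R^-1 *: \sum_(j < m) g i j (st_z S i j).
have varE c : var (fun j => n%:R^-1 * saga_term S i j ord0 c)
              = n%:R^-1 ^+ 2 * var (fun j => d j ord0 c).
  rewrite -(var_affine m_gt0 _ (zb ord0 c)); congr var; apply/funext => j.
  by rewrite /saga_term mxE.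
under eq_bigr => c _ do rewrite varE.
rewrite -mulr_sumr ler_wpM2l ?sqr_ge0 //.
apply: le_trans (ler_sum _ (fun c _ => var_le (fun j => d j ord0 c))) _.
rewrite /mean -mulr_sumr exchange_big /=; apply: ler_wpM2l; first by rewrite invr_ge0 ler0n.
by apply: ler_sum => j _; rewrite sqnE.
Qed.

Lemma saga_residual_le S :
  \sum_i mean (fun j => sqn (g i j (st_x S i) - g i j (st_z S i j)))
  <= 2 * L ^+ 2 * (consensus_err (st_x S)
                   + \sum_i mean (fun j => sqn (avg (st_x S) - st_z S i j))).
Proof.
rewrite /consensus_err -big_split mulr_sumr /=; apply: ler_sum => i _.
rewrite -[sqn (st_x S i - _)](mean_cst m_gt0) -meanD -meanZ; apply: mean_le => j /=.
apply: le_trans (L_smooth_sqn L_ge0 (g_smooth i j) _ _) _.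
rewrite -(subrK (avg (st_x S)) (st_x S i)) -addrA addrK.
have -> : 2 * L ^+ 2 * (sqn (st_x S i - avg (st_x S)) + sqn (avg (st_x S) - st_z S i j))
  = L ^+ 2 * (2 * sqn (st_x S i - avg (st_x S)) + 2 * sqn (avg (st_x S) - st_z S i j)).
  by ring.
by rewrite ler_wpM2l ?sqr_ge0 // sqnD_le.
Qed.

Lemma uexpect_sqn_saga_le S :
  uexpect (fun t => sqn (avg (saga_g g S t)))
  <= sqn (avg_grad g (st_x S)) + 2 * L ^+ 2 * n%:R^-1 ^+ 2 * consensus_err (st_x S)
     + 2 * L ^+ 2 * n%:R^-1 * tk S.
Proof.
rewrite uexpect_sqn_saga -addrA lerD2l; apply: le_trans (saga_var_le S) _.
have -> : 2 * L ^+ 2 * n%:R^-1 ^+ 2 * consensus_err (st_x S) + 2 * L ^+ 2 * n%:R^-1 * tk S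
  = n%:R^-1 ^+ 2 * (2 * L ^+ 2 * (consensus_err (st_x S)
                    + \sum_i mean (fun j => sqn (avg (st_x S) - st_z S i j)))).
  by rewrite /tk /mean /=; ring.
by apply: ler_wpM2l; [exact: sqr_ge0 | exact: saga_residual_le].
Qed.

Lemma gradF_avg_grad_gap (x : stack R n p) :
  sqn (gradF g (avg x) - avg_grad g x) <= L ^+ 2 * n%:R^-1 * consensus_err x.
Proof.
rewrite /gradF /avg_grad -scalerBr -sumrB; apply: le_trans (sqn_mean_le n_gt0 _) _.
rewrite -mulrA -meanZ; apply: mean_le => i.
rewrite /grad_loc -scalerBr -sumrB; apply: le_trans (sqn_mean_le m_gt0 _) _.
rewrite -[X in _ <= X](mean_cst m_gt0); apply: mean_le => j.
by rewrite sqn_subC; exact: L_smooth_sqn.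
Qed.

Lemma uexpect_Fobj_step S (alpha : R) : 0 <= alpha -> alpha * L <= 2^-1 ->
  uexpect (fun t => Fobj f (avg (st_x S) - alpha *: avg (saga_g g S t)))
  <= Fobj f (avg (st_x S))
     - alpha / 2 * sqn (gradF g (avg (st_x S)))
     - alpha / 4 * sqn (avg_grad g (st_x S))
     + alpha * L ^+ 2 / n%:R * consensus_err (st_x S)
     + alpha ^+ 2 * L ^+ 3 / n%:R * tk S.
Proof.
move=> alpha_ge0 alphaL; set xb := avg (st_x S).
have descent_t (t : draws) : Fobj f (xb - alpha *: avg (saga_g g S t))
    <= Fobj f xb + - alpha * dotv (gradF g xb) (avg (saga_g g S t))
       + L / 2 * alpha ^+ 2 * sqn (avg (saga_g g S t)).
  have := Fobj_descent xb (- alpha *: avg (saga_g g S t)).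
  by rewrite dotvZr sqnZ sqrrN [- alpha *: _ + xb]addrC scaleNr mulrA.
apply: le_trans (uexpect_le descent_t) _.
rewrite !uexpectD uexpect_cst // !uexpectZ uexpect_dotv_saga.
have E_sqn := uexpect_sqn_saga_le S.
have gap := gradF_avg_grad_gap (st_x S); rewrite sqnB in gap.
set A := sqn (gradF g xb) in gap *; set B := sqn (avg_grad g (st_x S)) in E_sqn gap *.
set C := consensus_err (st_x S) in E_sqn gap *; set T := tk S in E_sqn *.
set q := n%:R^-1 in E_sqn gap *.
have q_gt0 : 0 < q by rewrite invr_gt0 ltr0n.
have q_le1 : q <= 1 by rewrite invf_le1 ?ler1n ?ltr0n.
have B_ge0 : 0 <= B := sqn_ge0 _.
have C_ge0 : 0 <= C by apply: sumr_ge0 => i _; exact: sqn_ge0.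
have alphaLq : alpha * L * q <= 2^-1.
  by apply: le_trans alphaL; rewrite ler_piMr // mulr_ge0.
(* the step-size condition absorbs the second-order terms into the first-order ones *)
have c_ge0 : 0 <= L / 2 * alpha ^+ 2 by rewrite !mulr_ge0 ?invr_ge0 ?sqr_ge0.
have h1 := ler_wpM2l c_ge0 E_sqn.
have h2 := ler_wpM2l alpha_ge0 gap.
have h3 := ler_wpM2r (mulr_ge0 alpha_ge0 B_ge0) alphaL.
have d_ge0 : 0 <= alpha * L ^+ 2 * q * C by rewrite !mulr_ge0 ?sqr_ge0 // ltW.
have h4 := ler_wpM2r d_ge0 alphaLq.
lra.
Qed.

End SagaBounds.

Unset Implicit Arguments.
Set Strict Implicit.

Theorem lemma4 (R : realType) (n m p : nat)
  (f : 'I_n -> 'I_m -> 'rV[R]_p -> R) (g : 'I_n -> 'I_m -> 'rV[R]_p -> 'rV[R]_p)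
  (L : R) (W : 'M[R]_n) (alpha : R) (x0 : 'rV[R]_p) :
  (0 < n)%N -> (0 < m)%N -> (0 < p)%N ->
  (forall i j, is_gradient (f i j) (g i j)) ->
  0 < L -> (forall i j, L_smooth L (g i j)) ->
  (exists b : R, forall x, b <= Fobj f x) ->
  nonneg_mx W -> primitive_mx W -> doubly_stochastic W ->
  0 < alpha -> alpha <= (2 * L)^-1 ->
  forall (k : nat) (w : sample_path n m),
    let S := gt_saga g W alpha x0 w k in
    condexp k (fun w' => Fobj f (avg (st_x (gt_saga g W alpha x0 w' k.+1)))) w
    <= Fobj f (avg (st_x S))
       - alpha / 2 * sqn (gradF g (avg (st_x S)))
       - alpha / 4 * sqn (avg_grad g (st_x S))
       + alpha * L ^+ 2 / n%:R * consensus_err (st_x S)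
       + alpha ^+ 2 * L ^+ 3 / n%:R * tk S.
Proof.
move=> n_gt0 m_gt0 _ f_grad L_gt0 g_smooth _ _ _ [_ W_colsum] alpha_gt0 alpha_le k w /=.
set S := gt_saga g W alpha x0 w k.
have alphaL : alpha * L <= 2^-1.
  have -> : 2^-1 = (2 * L)^-1 * L :> R by field; rewrite gt_eqF.
  by rewrite ler_pM2r.
rewrite (@condexp_uexpect _ _ _ _ _
          (fun t => Fobj f (avg (st_x S) - alpha *: avg (saga_g g S t)))) //.
  exact: (uexpect_Fobj_step n_gt0 m_gt0 f_grad (ltW L_gt0) g_smooth S (ltW alpha_gt0)).
move=> d /=; rewrite eqxx (@gt_saga_prefix _ _ _ _ _ _ _ _ k _ w) ?avg_x_step // => t lt_tk.
by rewrite ltn_eqF.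
Qed.
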